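(* Let $f:[a,b]\to\mathbb{R}$ be twice differentiable with $|f''|\leq M$ on $[a,b]$. For all $\alpha\in f'([a,b])$ and all $x\in[a,b]$ such that $\|x\alpha+f(a)-a\alpha\|>M(b-a)^2$, we have \[ \lfloor f(x)\rfloor=\lfloor x\alpha+f(a)-a\alpha\rfloor. \]
   Context: $\|y\|$ denotes the distance from $y$ to the nearest integer; $\lfloor\cdot\rfloor$ is the floor function. *)

From Stdlib Require Import Reals Lra.
Open Scope R_scope.

(* One-sided-aware derivative on [a,b]: f has derivative f' x at every
   x in [a,b], the limit of the difference quotient being taken within [a,b]
   (so at the endpoints it is the one-sided derivative). *)
Definition deriv_on (f f' : R -> R) (a b : R) : Prop :=
  forall x, a <= x <= b ->
    limit1_in (fun y => (f y - f x) / (y - x))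
              (fun y => a <= y <= b /\ y <> x) (f' x) x.

(* floor function: Stdlib's Int_part r = up r - 1 is the floor of r *)
Definition floorR (y : R) : Z := Int_part y.

Definition dist_int (y : R) : R :=
  Rmin (y - IZR (floorR y)) (IZR (floorR y) + 1 - y).

(* Two applications of the mean value theorem: since |f''| <= M, f' stays within
   M(b-a) of alpha = f'(c) on [a,b], hence f stays within M(b-a)^2 of the
   tangent-like line x alpha + f(a) - a alpha.  A point closer to y than y is to
   the nearest integer has the same floor as y. *)

From Stdlib Require Import Reals Lra.
Open Scope R_scope.

(* The derivatives in [deriv_on] are one-sided at a and b, while Stdlib's [MVT]
   asks for two-sided continuity on the closed interval; composing with the
   clamp extends a function on [a,b] to all of R without changing it there. *)
Definition clamp (a b y : R) : R := Rmax a (Rmin b y).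

Lemma clamp_id a b y : a <= y <= b -> clamp a b y = y.
Proof. intros. unfold clamp, Rmax, Rmin. repeat destruct Rle_dec; lra. Qed.

Lemma clamp_in a b y : a <= b -> a <= clamp a b y <= b.
Proof. intros. unfold clamp, Rmax, Rmin. repeat destruct Rle_dec; lra. Qed.

Lemma Rabs_clamp_sub_le a b x y :
  a <= x <= b -> Rabs (clamp a b y - x) <= Rabs (y - x).
Proof.
  intros. unfold clamp, Rmax, Rmin. repeat destruct Rle_dec;
  unfold Rabs; repeat destruct Rcase_abs; lra.
Qed.

Lemma deriv_on_continuous_within h h' a b x :
  deriv_on h h' a b -> a <= x <= b ->
  forall eps, 0 < eps -> exists d, 0 < d /\
    forall z, a <= z <= b -> Rabs (z - x) < d -> Rabs (h z - h x) < eps.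
Proof.
  intros Hd Hx eps Heps.
  destruct (Hd x Hx 1 Rlt_0_1) as [d1 [Hd1 Hq]]; simpl in Hq; unfold R_dist in Hq.
  set (L := Rabs (h' x) + 1).
  assert (HL : 0 < L) by (pose proof (Rabs_pos (h' x)); unfold L; lra).
  exists (Rmin d1 (eps / L)); split.
  { apply Rmin_pos; [lra | apply Rdiv_lt_0_compat; lra]. }
  intros z Hz Hzx.
  destruct (Req_dec z x) as [-> | Hne].
  { unfold Rminus; rewrite Rplus_opp_r, Rabs_R0; lra. }
  assert (Hslope : Rabs ((h z - h x) / (z - x)) < L).
  { specialize (Hq z (conj (conj Hz Hne) (Rlt_le_trans _ _ _ Hzx (Rmin_l _ _)))).
    pose proof (Rabs_triang_inv ((h z - h x) / (z - x)) (h' x)). unfold L; lra. }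
  assert (Hclose : Rabs (z - x) < eps / L) by exact (Rlt_le_trans _ _ _ Hzx (Rmin_r _ _)).
  assert (HLeps : L * (eps / L) = eps) by (field; lra).
  replace (h z - h x) with ((h z - h x) / (z - x) * (z - x)) by (field; lra).
  rewrite Rabs_mult.
  pose proof (Rabs_pos (z - x)); pose proof (Rabs_pos ((h z - h x) / (z - x))).
  nra.
Qed.

Lemma continuity_pt_clamp_comp h h' a b x :
  a <= b -> deriv_on h h' a b -> a <= x <= b ->
  continuity_pt (fun y => h (clamp a b y)) x.
Proof.
  intros Hab Hd Hx eps Heps.
  destruct (deriv_on_continuous_within h h' a b x Hd Hx eps Heps) as [d [Hd0 Hnear]].
  exists d; split; [exact Hd0 |].
  intros y [_ Hy]; simpl in *; unfold R_dist in *.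
  rewrite (clamp_id a b x Hx).
  apply Hnear; [now apply clamp_in |].
  exact (Rle_lt_trans _ _ _ (Rabs_clamp_sub_le a b x y Hx) Hy).
Qed.

Lemma derivable_pt_lim_clamp_comp h h' a b x :
  deriv_on h h' a b -> a < x < b ->
  derivable_pt_lim (fun y => h (clamp a b y)) x (h' x).
Proof.
  intros Hd Hx eps Heps.
  destruct (Hd x ltac:(lra) eps Heps) as [d1 [Hd1 Hq]]; simpl in Hq; unfold R_dist in Hq.
  assert (Hpos : 0 < Rmin d1 (Rmin (x - a) (b - x))).
  { apply Rmin_pos; [lra | apply Rmin_pos; lra]. }
  exists (mkposreal _ Hpos); simpl; intros k Hk0 Hk.
  pose proof (Rmin_l d1 (Rmin (x - a) (b - x))).
  pose proof (Rmin_r d1 (Rmin (x - a) (b - x))).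
  pose proof (Rmin_l (x - a) (b - x)); pose proof (Rmin_r (x - a) (b - x)).
  assert (Hin : a <= x + k <= b) by (apply Rabs_def2 in Hk; lra).
  rewrite (clamp_id a b (x + k) Hin), (clamp_id a b x) by lra.
  replace k with (x + k - x) at 2 by ring.
  apply Hq; split; [split; [exact Hin | lra] |].
  replace (x + k - x) with k by ring; lra.
Qed.

Lemma deriv_on_mvt_le h h' a b beta K :
  deriv_on h h' a b ->
  (forall t, a <= t <= b -> Rabs (h' t - beta) <= K) ->
  forall u v, a <= u -> u < v -> v <= b ->
  Rabs (h v - h u - beta * (v - u)) <= K * (v - u).
Proof.
  intros Hd HK u v Hu Huv Hv.
  set (F := fun y => h (clamp a b y)).
  assert (HF : forall c, u < c < v -> derivable_pt_lim F c (h' c))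
    by (intros; apply derivable_pt_lim_clamp_comp; auto; lra).
  assert (prF : forall c, u < c < v -> derivable_pt F c)
    by (intros c Hc; exists (h' c); exact (HF c Hc)).
  assert (prid : forall c, u < c < v -> derivable_pt id c)
    by (intros; apply derivable_pt_id).
  destruct (MVT F id u v prF prid Huv) as [c [Hc Hmvt]].
  - intros; apply (continuity_pt_clamp_comp h h'); auto; lra.
  - intros; apply derivable_continuous_pt, derivable_pt_id.
  - rewrite (derive_pt_eq_0 _ _ _ (prF c Hc) (HF c Hc)),
            (derive_pt_eq_0 _ _ _ (prid c Hc) (derivable_pt_lim_id c)) in Hmvt.
    unfold id, F in Hmvt; rewrite (clamp_id a b u), (clamp_id a b v) in Hmvt by lra.
    replace (h v - h u - beta * (v - u)) with ((h' c - beta) * (v - u)) by lra.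
    rewrite Rabs_mult, (Rabs_right (v - u)) by lra.
    apply Rmult_le_compat_r; [lra | apply HK; lra].
Qed.

Lemma deriv_on_mvt_Rabs_le h h' a b beta K :
  deriv_on h h' a b ->
  (forall t, a <= t <= b -> Rabs (h' t - beta) <= K) ->
  forall u v, a <= u <= b -> a <= v <= b ->
  Rabs (h v - h u - beta * (v - u)) <= K * Rabs (v - u).
Proof.
  intros Hd HK u v Hu Hv.
  destruct (Rtotal_order u v) as [Huv | [<- | Hvu]].
  - rewrite (Rabs_right (v - u)) by lra.
    now apply (deriv_on_mvt_le h h' a b).
  - replace (h u - h u - beta * (u - u)) with 0 by ring.
    replace (u - u) with 0 by ring; rewrite Rabs_R0; lra.
  - rewrite <- Rabs_Ropp, (Rabs_left (v - u)) by lra.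
    replace (- (h v - h u - beta * (v - u))) with (h u - h v - beta * (u - v)) by ring.
    replace (- (v - u)) with (u - v) by ring.
    now apply (deriv_on_mvt_le h h' a b).
Qed.

Lemma deriv2_on_linear_approx f f1 f2 a b M c x :
  deriv_on f f1 a b -> deriv_on f1 f2 a b ->
  (forall t, a <= t <= b -> Rabs (f2 t) <= M) ->
  a <= c <= b -> a <= x <= b ->
  Rabs (f x - (x * f1 c + f a - a * f1 c)) <= M * (b - a) ^ 2.
Proof.
  intros Hf Hf1 HM Hc Hx.
  assert (HM0 : 0 <= M) by (pose proof (Rabs_pos (f2 a)); pose proof (HM a ltac:(lra)); lra).
  assert (Hdist : forall t, a <= t <= b -> Rabs (t - c) <= b - a)
    by (intros; apply Rabs_le; lra).
  assert (Hslope : forall t, a <= t <= b -> Rabs (f1 t - f1 c) <= M * (b - a)).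
  { intros t Ht.
    assert (Hmvt := deriv_on_mvt_Rabs_le f1 f2 a b 0 M Hf1
      ltac:(intros; rewrite Rminus_0_r; auto) c t Hc Ht).
    rewrite Rmult_0_l, Rminus_0_r in Hmvt.
    pose proof (Hdist t Ht); nra. }
  assert (Hmvt := deriv_on_mvt_Rabs_le f f1 a b (f1 c) (M * (b - a)) Hf Hslope a x
    ltac:(lra) Hx).
  replace (f x - (x * f1 c + f a - a * f1 c)) with (f x - f a - f1 c * (x - a)) by ring.
  rewrite (Rabs_right (x - a)) in Hmvt by lra.
  assert (HMba : 0 <= M * (b - a)) by nra.
  nra.
Qed.

Lemma floorR_eq_of_lt_dist_int r y :
  Rabs (r - y) < dist_int y -> floorR r = floorR y.
Proof.
  unfold dist_int; intros Hr; apply Rabs_def2 in Hr.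
  pose proof (Rmin_l (y - IZR (floorR y)) (IZR (floorR y) + 1 - y)).
  pose proof (Rmin_r (y - IZR (floorR y)) (IZR (floorR y) + 1 - y)).
  symmetry; apply Int_part_spec; lra.
Qed.

Theorem lemma10 (f f1 f2 : R -> R) (a b M : R) :
  a < b ->
  deriv_on f f1 a b ->
  deriv_on f1 f2 a b ->
  (forall t, a <= t <= b -> Rabs (f2 t) <= M) ->
  forall alpha x : R,
    (exists c, a <= c <= b /\ f1 c = alpha) ->
    a <= x <= b ->
    dist_int (x * alpha + f a - a * alpha) > M * (b - a) ^ 2 ->
    floorR (f x) = floorR (x * alpha + f a - a * alpha).
Proof.
  intros _ Hf Hf1 HM alpha x [c [Hc <-]] Hx Hdist.
  apply floorR_eq_of_lt_dist_int.
  eapply Rle_lt_trans; [exact (deriv2_on_linear_approx f f1 f2 a b M c x Hf Hf1 HM Hc Hx) | lra].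
Qed.
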